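(* Let $\mathcal{D}=\{z_1,\dots,z_n\}$, let $\mathcal{F}$ be a hypothesis class, $\ell:\mathcal{F}\times\mathcal{Z}\to\mathbb{R}_{\ge0}$ a loss with empirical risk $L(f;\mathcal{D})=\sum_{i=1}^n\ell(f;z_i)$, and let $\varepsilon\in(0,1)$. Let $\bar s_1,\dots,\bar s_n$ be any numbers with $\bar s_i\ge s_i$ for all $i$, where $s_i$ are the sensitivities. Let $\pi$ be a permutation of $\{1,\dots,n\}$ with $\bar s_{\pi(1)}\le\dots\le\bar s_{\pi(n)}$, let $\varepsilon'=\frac{2\varepsilon}{1+\varepsilon}$, let $m$ be the largest integer in $\{0,\dots,n\}$ with $\sum_{j=1}^m\bar s_{\pi(j)}\le\varepsilon'$, let $U=\{\pi(1),\dots,\pi(m)\}$, $S=\{1,\dots,n\}\setminus U$, $T_U=\sum_{i\in U}\bar s_i$, and $\alpha=\sqrt{\frac{1-\varepsilon^2}{1-T_U}}$. Then for every $f\in\mathcal{F}$, \[ (1-\varepsilon)L(f;\mathcal{D})\le \sum_{i\in S}\alpha\,\ell(f;z_i)\le (1+\varepsilon)L(f;\mathcal{D}), \] i.e. $(S,\{\alpha\}_{i\in S})$ is a $(1\pm\varepsilon)$-coreset.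
   Context: The sensitivity of point $i$ is $s_i \coloneqq \sup_{f\in\mathcal{F},\ L(f;\mathcal{D})>0} \frac{\ell(f;z_i)}{L(f;\mathcal{D})}$ (taken to be $0$ if no $f$ has $L(f;\mathcal{D})>0$). A weighted subset $(S,\{\alpha_i\}_{i\in S})$ is a $(1\pm\varepsilon)$-coreset if $(1-\varepsilon)L(f;\mathcal{D})\le\sum_{i\in S}\alpha_i\ell(f;z_i)\le(1+\varepsilon)L(f;\mathcal{D})$ for all $f\in\mathcal{F}$. *)

From HB Require Import structures.
From mathcomp Require Import all_boot all_order all_algebra all_fingroup.
From mathcomp Require Import all_classical all_reals ereal.
Set Implicit Arguments. Unset Strict Implicit. Unset Printing Implicit Defensive.
Import Order.TTheory GRing.Theory Num.Theory.
Local Open Scope ring_scope.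
Local Open Scope classical_set_scope.

Definition emp_risk (R : realType) (F Z : Type) (n : nat)
  (loss : F -> Z -> R) (z : 'I_n -> Z) (f : F) : R :=
  \sum_(i < n) loss f (z i).

(* Sensitivity s_i = sup_{f, L f > 0} l(f;z_i)/L(f), in the extended reals
   (may be +oo); taken to be 0 if no f has L(f) > 0. *)
Definition sensitivity (R : realType) (F Z : Type) (n : nat)
  (loss : F -> Z -> R) (z : 'I_n -> Z) (i : 'I_n) : \bar R :=
  if pselect (exists f : F, 0 < emp_risk loss z f)
  then ereal_sup [set ((loss f (z i)) / emp_risk loss z f)%:E
                  | f in [set f : F | 0 < emp_risk loss z f]]
  else 0%E.

(** The sensitivity bound gives [l(f; z_i) <= sbar_i L(f)] for every [i], so
    dropping the points of [U] loses at most the fraction [T_U] of the risk: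
    [(1 - T_U) L <= sum_S l <= L].  Rescaling by [alpha] turns this into a
    [(1 +- eps)] sandwich, because the threshold [T_U <= 2 eps / (1 + eps)] is
    exactly [1 - eps <= (1 + eps) (1 - T_U)], which yields both
    [1 - eps <= alpha (1 - T_U)] and [alpha <= 1 + eps]. *)
From HB Require Import structures.
From mathcomp Require Import all_boot all_order all_algebra all_fingroup.
From mathcomp Require Import all_classical all_reals ereal.
From mathcomp Require Import ring lra.
Set Implicit Arguments.
Unset Strict Implicit.
Unset Printing Implicit Defensive.
Import Order.TTheory GRing.Theory Num.Theory.
Local Open Scope ring_scope.

Section SensitivityBound.
Variables (R : realType) (F Z : Type) (n : nat).
Variables (loss : F -> Z -> R) (z : 'I_n -> Z).

Lemma sensitivity_ge_ratio f i : 0 < emp_risk loss z f ->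
  ((loss f (z i) / emp_risk loss z f)%:E <= sensitivity loss z i)%E.
Proof.
move=> Lf_gt0; rewrite /sensitivity.
case: pselect => [_ | no_pos] /=; last by case: no_pos; exists f.
by apply: ereal_sup_ubound; exists f.
Qed.

Lemma emp_risk_setC f (A : {set 'I_n}) :
  \sum_(i in ~: A) loss f (z i) =
  emp_risk loss z f - \sum_(i in A) loss f (z i).
Proof.
rewrite /emp_risk [\sum_(i < n) _](bigID (mem A)) /= addrC addrK.
by apply: eq_bigl => i; rewrite inE.
Qed.

Hypothesis loss_ge0 : forall f x, 0 <= loss f x.

Lemma emp_risk_ge0 f : 0 <= emp_risk loss z f.
Proof. exact: sumr_ge0. Qed.

Lemma loss_le_emp_risk f i : loss f (z i) <= emp_risk loss z f.
Proof. by rewrite /emp_risk (bigD1 i) //= lerDl sumr_ge0. Qed.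

Lemma loss_le_sensitivity_mul f i (s : R) :
  (sensitivity loss z i <= s%:E)%E -> loss f (z i) <= s * emp_risk loss z f.
Proof.
move=> sens_le.
have [Lf0 | Lf_neq0] := eqVneq (emp_risk loss z f) 0.
  by rewrite Lf0 mulr0 -Lf0 loss_le_emp_risk.
have Lf_gt0 : 0 < emp_risk loss z f by rewrite lt0r Lf_neq0 emp_risk_ge0.
rewrite -ler_pdivrMr // -lee_fin.
exact: le_trans (sensitivity_ge_ratio i Lf_gt0) sens_le.
Qed.

Lemma sum_loss_le_sensitivity_mul f (A : {set 'I_n}) (s : 'I_n -> R) :
  (forall i, (sensitivity loss z i <= (s i)%:E)%E) ->
  \sum_(i in A) loss f (z i) <= (\sum_(i in A) s i) * emp_risk loss z f.
Proof.
move=> sens_le; rewrite mulr_suml; apply: ler_sum => i _.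
exact: loss_le_sensitivity_mul.
Qed.

End SensitivityBound.

Definition coreset_weight (R : rcfType) (eps T : R) : R :=
  Num.sqrt ((1 - eps ^+ 2) / (1 - T)).

Lemma coreset_threshold (R : realFieldType) (eps T : R) :
  0 < eps -> T <= 2 * eps / (1 + eps) -> 1 - eps <= (1 + eps) * (1 - T).
Proof.
move=> eps_gt0; rewrite ler_pdivlMr; last lra.
by move=> T_mul_le; nra.
Qed.

Lemma coreset_weight_sqr (R : rcfType) (eps T : R) :
  0 <= eps < 1 -> T < 1 -> coreset_weight eps T ^+ 2 * (1 - T) = 1 - eps ^+ 2.
Proof.
move=> /andP[eps_ge0 eps_lt1] T_lt1; have mass_gt0 : 0 < 1 - T by lra.
by rewrite sqr_sqrtr ?mulfVK ?gt_eqF // divr_ge0 ?ltW //; nra.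
Qed.

Lemma coreset_weight_le (R : rcfType) (eps T : R) : 0 < eps < 1 ->
  1 - eps <= (1 + eps) * (1 - T) -> coreset_weight eps T <= 1 + eps.
Proof.
move=> /andP[eps_gt0 eps_lt1] threshold.
have mass_gt0 : 0 < 1 - T by nra.
have weight_sqr : coreset_weight eps T ^+ 2 * (1 - T) = 1 - eps ^+ 2.
  by rewrite coreset_weight_sqr ?(ltW eps_gt0) //; lra.
have weight_ge0 : 0 <= coreset_weight eps T by exact: sqrtr_ge0.
rewrite -ler_sqr ?nnegrE; [|done|lra].
by rewrite -(ler_pM2r mass_gt0) weight_sqr !expr2; nra.
Qed.

Lemma coreset_weight_ge (R : rcfType) (eps T : R) : 0 < eps < 1 ->
  1 - eps <= (1 + eps) * (1 - T) -> 1 - eps <= coreset_weight eps T * (1 - T).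
Proof.
move=> /andP[eps_gt0 eps_lt1] threshold.
have mass_gt0 : 0 < 1 - T by nra.
have weight_ge0 : 0 <= coreset_weight eps T by exact: sqrtr_ge0.
have weight_sqr : coreset_weight eps T ^+ 2 * (1 - T) = 1 - eps ^+ 2.
  by rewrite coreset_weight_sqr ?(ltW eps_gt0) //; lra.
rewrite -ler_sqr ?nnegrE; [|lra|nra].
by rewrite exprMn [(1 - T) ^+ 2]expr2 mulrA weight_sqr !expr2; nra.
Qed.

Lemma coreset_weight_sandwich (R : rcfType) (eps T L A : R) : 0 < eps < 1 ->
  T <= 2 * eps / (1 + eps) -> 0 <= L -> 0 <= A -> A <= T * L ->
  (1 - eps) * L <= coreset_weight eps T * (L - A) /\
  coreset_weight eps T * (L - A) <= (1 + eps) * L.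
Proof.
move=> eps01 T_le L_ge0 A_ge0 A_le.
have threshold := coreset_threshold (andP eps01).1 T_le.
have := coreset_weight_le eps01 threshold.
have := coreset_weight_ge eps01 threshold.
have : 0 <= coreset_weight eps T by exact: sqrtr_ge0.
by split; nra.
Qed.

Lemma sum_perm_prefix (R : nmodType) (n m : nat) (pi : {perm 'I_n})
    (g : 'I_n -> R) :
  \sum_(i in [set pi j | j : 'I_n & (j < m)%N]) g i =
  \sum_(j < n | (j < m)%N) g (pi j).
Proof.
rewrite big_imset /=; last by move=> x y _ _; apply: perm_inj.
by apply: eq_bigl => j; rewrite inE.
Qed.

Theorem theorem1 (R : realType) (F Z : Type) (n : nat)
  (loss : F -> Z -> R) (z : 'I_n -> Z)
  (loss_ge0 : forall f x, 0 <= loss f x)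
  (eps : R) (eps_gt0 : 0 < eps) (eps_lt1 : eps < 1)
  (sbar : 'I_n -> R)
  (sbar_ge : forall i, (sensitivity loss z i <= (sbar i)%:E)%E)
  (pi : {perm 'I_n})
  (pi_sorted : forall j k : 'I_n, (j <= k)%N -> sbar (pi j) <= sbar (pi k))
  (m : nat) (m_le_n : (m <= n)%N)
  (m_ok : \sum_(j < n | (j < m)%N) sbar (pi j) <= 2 * eps / (1 + eps))
  (m_max : forall k : nat, (k <= n)%N ->
     \sum_(j < n | (j < k)%N) sbar (pi j) <= 2 * eps / (1 + eps) -> (k <= m)%N)
  (U S : {set 'I_n})
  (U_def : U = [set pi j | j : 'I_n & (j < m)%N])
  (S_def : S = ~: U)
  (alpha : R)
  (alpha_def : alpha = Num.sqrt ((1 - eps ^+ 2) / (1 - \sum_(i in U) sbar i))) :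
  forall f : F,
    (1 - eps) * emp_risk loss z f <= \sum_(i in S) alpha * loss f (z i) /\
    \sum_(i in S) alpha * loss f (z i) <= (1 + eps) * emp_risk loss z f.
Proof.
move=> f.
have T_le : \sum_(i in U) sbar i <= 2 * eps / (1 + eps).
  by rewrite U_def sum_perm_prefix.
rewrite -mulr_sumr S_def emp_risk_setC alpha_def -/(coreset_weight eps _).
apply: coreset_weight_sandwich T_le _ _ _.
- by rewrite eps_gt0 eps_lt1.
- exact: emp_risk_ge0.
- exact: sumr_ge0.
- exact: sum_loss_le_sensitivity_mul.
Qed.
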